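(* Let $G$ and $H$ be connected graphs, each of order at least $2$. Then $dim_s(G\square H)=2$ if and only if both $G$ and $H$ are paths.
   Context: Graphs are finite, simple, undirected; for connected $G$, $d_G$ is the shortest-path distance and $I_G[u,v]$ is the set of vertices lying on some shortest $u$–$v$ path. A vertex $w$ strongly resolves vertices $u,v$ if $v\in I_G[u,w]$ or $u\in I_G[v,w]$. A strong resolving set of $G$ is a set $S\subseteq V(G)$ such that every pair of vertices is strongly resolved by some vertex of $S$; $dim_s(G)$ is the minimum cardinality of such a set. $G\square H$ denotes the Cartesian product: vertex set $V(G)\times V(H)$, $(a,b)\sim(c,d)$ iff ($a=c$ and $bd\in E(H)$) or ($b=d$ and $ac\in E(G)$). *)

From mathcomp Require Import all_boot.
Set Implicit Arguments. Unset Strict Implicit. Unset Printing Implicit Defensive.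

Section Graphs.
Variable T : finType.
Implicit Types (e : rel T) (u v w x : T).

Definition simple_graph e := symmetric e /\ irreflexive e.
Definition connected_graph e := forall u v, connect e u v.

Definition walkb e n u v : bool :=
  [exists s : n.-tuple T, path e u s && (last u s == v)].

(* shortest-path distance: least n with an n-edge walk (n < #|T| when connected) *)
Definition dist e u v : nat := find (fun n => walkb e n u v) (iota 0 #|T|).

Definition interval e u v x : bool :=
  [exists s : (dist e u v).-tuple T,
     [&& path e u s, last u s == v & x \in u :: s]].

Definition strongly_resolves e w u v : bool :=
  interval e u w v || interval e v w u.

Definition strong_resolving_set e (S : {set T}) : bool :=
  [forall u, forall v, (u != v) ==> [exists w in S, strongly_resolves e w u v]].

Definition sdim e : nat :=
  \big[minn/#|T|]_(S : {set T} | strong_resolving_set e S) #|S|.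

Definition is_path_graph e : Prop :=
  exists f : 'I_#|T| -> T, bijective f /\
    forall i j : 'I_#|T|, e (f i) (f j) = ((i.+1 == j) || (j.+1 == i)).
End Graphs.

Definition boxrel (T1 T2 : finType) (e1 : rel T1) (e2 : rel T2) : rel (T1 * T2) :=
  fun x y => ((x.1 == y.1) && e2 x.2 y.2) || ((x.2 == y.2) && e1 x.1 y.1).

From mathcomp Require Import all_boot zify.
Set Implicit Arguments. Unset Strict Implicit. Unset Printing Implicit Defensive.

(* Distances in G □ H add up, so (c, d) lies on a geodesic from (a, b) to
   (p, q) iff c lies on one from a to p in G and d on one from b to q in H.
   If G and H are paths, the ends x0, xm of G and an end y0 of H give the
   strong resolving set {(x0, y0), (xm, y0)}, while no single vertex suffices
   since two of its neighbours are equidistant from it.  Conversely, if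
   {(p1, q1), (p2, q2)} strongly resolves G □ H, then the distance to p1 is
   injective on G (and the distance to q1 on H), which makes G (and H) a
   path. *)

Lemma exists_neq (T : finType) (x : T) : 1 < #|T| -> exists y, y != x.
Proof.
case/card_gt1P => a [b [_ _ ab]].
by case: (eqVneq a x) => [<-|]; [exists b; rewrite eq_sym | exists a].
Qed.

Section Distance.
Variables (T : finType) (e : rel T).
Hypotheses (e_sym : symmetric e) (e_conn : connected_graph e).

Lemma walkbP n u v :
  reflect (exists s : seq T, [/\ size s = n, path e u s & last u s = v])
          (walkb e n u v).
Proof.
apply: (iffP existsP) => [[s /andP[s_path /eqP s_last]]|[s [s_size s_path s_last]]].
  by exists s; rewrite size_tuple.
have s_size' : size s == n by rewrite s_size.
by exists (Tuple s_size'); rewrite /= s_path s_last eqxx.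
Qed.

Lemma walkb_cat n1 n2 u v w :
  walkb e n1 u v -> walkb e n2 v w -> walkb e (n1 + n2) u w.
Proof.
move=> /walkbP[s1 [<- p1 l1]] /walkbP[s2 [<- p2 l2]]; apply/walkbP.
by exists (s1 ++ s2); rewrite size_cat cat_path last_cat l1 p1 p2 l2.
Qed.

Lemma walkb_edge u v : e u v -> walkb e 1 u v.
Proof. by move=> uv; apply/walkbP; exists [:: v]; rewrite /= uv. Qed.

(* A shortest connecting path is duplicate-free, hence has fewer than #|T| edges. *)
Lemma has_walkb u v : has (fun n => walkb e n u v) (iota 0 #|T|).
Proof.
have /connectP[p p_path p_last] := e_conn u v.
case: (shortenP p_path) p_last => q q_path q_uniq _ q_last.
apply/hasP; exists (size q); last by apply/walkbP; exists q.
rewrite mem_iota add0n.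
by have := max_card (mem (u :: q)); rewrite (card_uniqP q_uniq).
Qed.

Lemma dist_lt_card u v : dist e u v < #|T|.
Proof. by have := has_walkb u v; rewrite has_find size_iota. Qed.

Lemma walkb_dist u v : walkb e (dist e u v) u v.
Proof. by have := nth_find 0 (has_walkb u v); rewrite nth_iota ?dist_lt_card. Qed.

Lemma dist_min n u v : walkb e n u v -> dist e u v <= n.
Proof.
move=> uv; rewrite leqNgt; apply/negP => lt_n.
have n_lt : n < #|T| by apply: ltn_trans lt_n (dist_lt_card u v).
by have := before_find 0 lt_n; rewrite nth_iota // uv.
Qed.

Lemma dist_triangle u v w : dist e u w <= dist e u v + dist e v w.
Proof. by apply: dist_min; apply: walkb_cat; apply: walkb_dist. Qed.

Lemma dist_edge u v : e u v -> dist e u v <= 1.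
Proof. by move/walkb_edge/dist_min. Qed.

Lemma dist0 u : dist e u u = 0.
Proof. by apply/eqP; rewrite -leqn0; apply: dist_min; apply/walkbP; exists [::]. Qed.

Lemma dist_eq0 u v : (dist e u v == 0) = (u == v).
Proof.
apply/eqP/eqP => [d0 | ->]; last exact: dist0.
have /walkbP[s [s_size _ <-]] := walkb_dist u v.
by move: s_size; rewrite d0; case: s.
Qed.

Lemma dist_lipschitz (phi : T -> nat) :
  (forall x y, e x y -> phi x <= (phi y).+1) ->
  forall u v, phi u <= dist e u v + phi v.
Proof.
move=> phi_edge u v; have /walkbP[s [<- s_path <-]] := walkb_dist u v.
elim: s u s_path => [|y s IH] u //= /andP[uy s_path].
by have := phi_edge _ _ uy; have := IH _ s_path; lia.
Qed.

Lemma distC u v : dist e u v = dist e v u.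
Proof.
suff dist_le x y : dist e y x <= dist e x y by apply/eqP; rewrite eqn_leq !dist_le.
have := @dist_lipschitz (dist e y) _ x y; rewrite dist0 addn0; apply=> a b ab.
rewrite e_sym in ab.
by have := dist_triangle y b a; have := dist_edge ab; lia.
Qed.

Lemma dist_first_step n u v :
  dist e u v = n.+1 -> exists2 z, e u z & dist e z v = n.
Proof.
move=> uv; have /walkbP[s [s_size s_path s_last]] := walkb_dist u v.
rewrite uv in s_size.
case: s s_size s_path s_last => [|z s] //= [s_size] /andP[uz s_path] s_last.
exists z => //; apply/eqP; rewrite eqn_leq; apply/andP; split.
  by rewrite -s_size; apply: dist_min; apply/walkbP; exists s.
by have := dist_triangle u z v; have := dist_edge uz; lia.
Qed.

Lemma exists_edge u : 1 < #|T| -> exists v, e u v.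
Proof.
move=> /(exists_neq u)[v]; rewrite eq_sym -dist_eq0.
case duv: (dist e u v) => [|n] // _.
by have [z uz _] := dist_first_step duv; exists z.
Qed.

Lemma intervalP u w x :
  reflect (dist e u w = dist e u x + dist e x w) (interval e u w x).
Proof.
apply: (iffP existsP) => [[s /and3P[s_path /eqP s_last x_in]] | uxw].
  have s_size := size_tuple s.
  case: (splitPl x_in) s_path s_last s_size => p1 p2 p1_last.
  rewrite cat_path last_cat p1_last size_cat => /andP[p1_path p2_path] p2_last s_size.
  have ux : dist e u x <= size p1 by apply: dist_min; apply/walkbP; exists p1.
  have xw : dist e x w <= size p2 by apply: dist_min; apply/walkbP; exists p2.
  have {}s_size : size p1 + size p2 = dist e u w := s_size.
  by have := dist_triangle u x w; lia.
have /walkbP[s1 [s1_size s1_path s1_last]] := walkb_dist u x.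
have /walkbP[s2 [s2_size s2_path s2_last]] := walkb_dist x w.
have s_size : size (s1 ++ s2) == dist e u w by rewrite size_cat s1_size s2_size uxw.
exists (Tuple s_size); rewrite /= cat_path last_cat s1_last s1_path s2_path s2_last eqxx.
by rewrite -cat_cons mem_cat -{1}s1_last mem_last.
Qed.

Lemma interval_last u w : interval e u w w.
Proof. by apply/intervalP; rewrite dist0 addn0. Qed.

Lemma interval_id u x : interval e u u x -> x = u.
Proof.
move/intervalP; rewrite dist0 => /esym/eqP.
by rewrite addn_eq0 dist_eq0 => /andP[/eqP].
Qed.

Lemma interval_dist_eq u v w : interval e u w v -> dist e u w = dist e v w -> u = v.
Proof.
move/intervalP => uvw uw_vw; apply/eqP; rewrite -dist_eq0.
by move: uvw; rewrite uw_vw; lia.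
Qed.

Lemma interval_antisym u v w : interval e u w v -> interval e v w u -> u = v.
Proof.
move=> uvw vuw; apply: (interval_dist_eq uvw).
by move/intervalP: uvw; move/intervalP: vuw; lia.
Qed.
End Distance.

Section PathGraph.
Variables (T : finType) (e : rel T).
Hypotheses (e_sym : symmetric e) (e_irr : irreflexive e) (e_conn : connected_graph e).

(* If distances to [p] separate vertices, ordering vertices by their distance
   to [p] enumerates a path: each vertex at distance [n.+1] has a neighbour at
   distance [n], which can only be the unique such vertex. *)
Lemma path_graph_of_dist_inj p : injective (dist e ^~ p) -> is_path_graph e.
Proof.
move=> dist_inj.
pose rank x : 'I_#|T| := Ordinal (dist_lt_card e_conn x p).
have rank_inj : injective rank by move=> x y /(congr1 val) /dist_inj.
have [f rankK fK] : bijective rank by apply: inj_card_bij rank_inj _; rewrite card_ord.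
have dist_f i : dist e (f i) p = i by have := fK i => /(congr1 val).
have edge_succ (i j : 'I_#|T|) : i.+1 = j -> e (f i) (f j).
  move=> ij; have := dist_f j; rewrite -ij => /(dist_first_step e_conn)[z fj_z dz].
  have -> : f i = z by apply: dist_inj; rewrite /= dz dist_f.
  by rewrite e_sym.
exists f; split; first by exists rank.
move=> i j; apply/idP/idP => [fij | /orP[] /eqP ij].
- have ij : (i : nat) != j.
    by apply: contraTneq fij => /val_inj ->; rewrite e_irr.
  have := dist_triangle e_conn (f i) (f j) p.
  have := dist_triangle e_conn (f j) (f i) p.
  have := dist_edge e_conn fij; rewrite (distC e_sym e_conn (f i)) !dist_f.
  by move: ij; rewrite !eqn_leq; lia.
- exact: edge_succ.
- by rewrite e_sym; apply: edge_succ.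
Qed.

Lemma path_graph_dist (f : 'I_#|T| -> T) :
  bijective f -> (forall i j, e (f i) (f j) = (i.+1 == j) || (j.+1 == i)) ->
  forall i j, dist e (f i) (f j) = (i - j) + (j - i).
Proof.
move=> [g fK gK] f_edge.
have dist_up k (i j : 'I_#|T|) : i <= j -> j - i = k -> dist e (f i) (f j) <= k.
  elim: k i => [|k IH] i le_ij ji.
    have -> : i = j by apply: val_inj; apply/eqP; rewrite eqn_leq le_ij -subn_eq0 ji.
    by rewrite dist0.
  have i1_lt : i.+1 < #|T| by apply: leq_trans (ltn_ord j); lia.
  apply: leq_trans (dist_triangle e_conn _ (f (Ordinal i1_lt)) _) _.
  rewrite -[k.+1]add1n leq_add //.
    by apply: (dist_edge e_conn); rewrite f_edge eqxx.
  by apply: IH => /=; [rewrite -subn_gt0 ji | rewrite subnS ji].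
move=> i j; apply/eqP; rewrite eqn_leq; apply/andP; split.
  case: (leqP i j) => [le_ij | lt_ji]; first by apply: dist_up; lia.
  by rewrite (distC e_sym e_conn); apply: dist_up; lia.
have := @dist_lipschitz _ e e_conn (fun x => (g x - j) + (j - g x)) _ (f i) (f j).
rewrite /= !fK !subnn !addn0; apply=> x y.
rewrite -{1}(gK x) -{1}(gK y) f_edge.
by move: (nat_of_ord (g x)) (nat_of_ord (g y)) => a b /orP[] /eqP; lia.
Qed.

(* [x0] and [xm] are the two ends of the path. *)
Lemma path_graph_ends : is_path_graph e -> 0 < #|T| ->
  exists x0 xm : T,
    (forall a c, interval e a x0 c || interval e a xm c) /\
    (forall a c, interval e a x0 c || interval e c x0 a).
Proof.
move=> [f [f_bij f_edge]] T_gt0.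
have dist_f := path_graph_dist f_bij f_edge.
have [g fK gK] := f_bij.
have Tm_lt : #|T|.-1 < #|T| by rewrite prednK.
pose i0 := Ordinal T_gt0; pose im := Ordinal Tm_lt.
have i0_val : val i0 = 0 by [].
have im_val : val im = #|T|.-1 by [].
exists (f i0), (f im); split => a c; rewrite -(gK a) -(gK c); apply/orP.
  case: (leqP (g c) (g a)) => [le_ca | lt_ac]; [left | right];
    apply/(intervalP e_conn); rewrite !dist_f ?i0_val ?im_val;
    by have := ltn_ord (g c); lia.
by case: (leqP (g c) (g a)) => [le_ca | lt_ac]; [left | right];
  apply/(intervalP e_conn); rewrite !dist_f i0_val; lia.
Qed.
End PathGraph.

Lemma bigmin_le_cond (I : eqType) (r : seq I) (P : pred I) (F : I -> nat) n i0 :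
  i0 \in r -> P i0 -> \big[minn/n]_(i <- r | P i) F i <= F i0.
Proof.
elim: r => //= i r IH; rewrite in_cons big_cons => /orP[/eqP <- -> | i0_r P_i0].
  exact: geq_minl.
by case: (P i); [apply: leq_trans (geq_minr _ _) _|]; apply: IH.
Qed.

Section StrongDimension.
Variables (T : finType) (e : rel T).

Lemma strong_resolving_setP (S : {set T}) :
  reflect (forall u v, u != v -> exists2 w, w \in S & strongly_resolves e w u v)
          (strong_resolving_set e S).
Proof.
apply: (iffP forallP) => [srs u v uv | res u].
  by have /forallP/(_ v)/implyP/(_ uv)/existsP[w /andP[]] := srs u; exists w.
apply/forallP => v; apply/implyP => /(res u)[w w_S res_w].
by apply/existsP; exists w; rewrite w_S.
Qed.

Lemma sdim_le (S : {set T}) : strong_resolving_set e S -> sdim e <= #|S|.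
Proof. by move=> srs; apply: bigmin_le_cond; rewrite ?mem_index_enum. Qed.

Hypothesis e_conn : connected_graph e.

(* The default value #|T| of the minimum in [sdim] is attained by [setT],
   since [v] itself strongly resolves [u] and [v]. *)
Lemma sdim_attained : exists2 S, strong_resolving_set e S & #|S| = sdim e.
Proof.
have setT_res : strong_resolving_set e [set: T].
  apply/strong_resolving_setP => u v _.
  by exists v; rewrite ?inE /strongly_resolves ?interval_last.
rewrite /sdim; apply: (big_ind (fun n => exists2 S, strong_resolving_set e S & #|S| = n)).
- by exists [set: T]; rewrite ?cardsT.
- move=> _ _ [S S_res <-] [S' S'_res <-].
  case: (leqP #|S| #|S'|) => [le_SS' | /ltnW le_S'S].
    by exists S; rewrite ?(minn_idPl le_SS').
  by exists S'; rewrite ?(minn_idPr le_S'S).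
- by move=> S srs; exists S.
Qed.
End StrongDimension.

Section CartesianProduct.
Variables (T1 T2 : finType) (e1 : rel T1) (e2 : rel T2).
Hypotheses (e1_conn : connected_graph e1) (e2_conn : connected_graph e2).
Local Notation box := (boxrel e1 e2).

Lemma path_box_l (b : T2) (a : T1) (s : seq T1) :
  path e1 a s -> path box (a, b) [seq (x, b) | x <- s].
Proof.
by elim: s a => //= x s IH a /andP[ax /IH ->]; rewrite /boxrel /= eqxx ax orbT.
Qed.

Lemma path_box_r (a : T1) (b : T2) (s : seq T2) :
  path e2 b s -> path box (a, b) [seq (a, y) | y <- s].
Proof. by elim: s b => //= y s IH b /andP[b_y /IH ->]; rewrite /boxrel /= eqxx b_y. Qed.

Lemma last_box_l (b : T2) (a : T1) (s : seq T1) :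
  last (a, b) [seq (x, b) | x <- s] = (last a s, b).
Proof. by elim: s a => //= x s IH a; rewrite IH. Qed.

Lemma last_box_r (a : T1) (b : T2) (s : seq T2) :
  last (a, b) [seq (a, y) | y <- s] = (a, last b s).
Proof. by elim: s b => //= y s IH b; rewrite IH. Qed.

Lemma walkb_box_l (b : T2) n (a c : T1) :
  walkb e1 n a c -> walkb box n (a, b) (c, b).
Proof.
move=> /walkbP[s [<- s_path <-]]; apply/walkbP; exists [seq (x, b) | x <- s].
by rewrite size_map path_box_l // last_box_l.
Qed.

Lemma walkb_box_r (a : T1) n (b d : T2) :
  walkb e2 n b d -> walkb box n (a, b) (a, d).
Proof.
move=> /walkbP[s [<- s_path <-]]; apply/walkbP; exists [seq (a, y) | y <- s].
by rewrite size_map path_box_r // last_box_r.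
Qed.

Lemma box_connected : connected_graph box.
Proof.
move=> [a b] [c d]; apply: (@connect_trans _ _ (c, b)); apply/connectP.
  have /connectP[s s_path ->] := e1_conn a c.
  by exists [seq (x, b) | x <- s]; rewrite ?path_box_l ?last_box_l.
have /connectP[s s_path ->] := e2_conn b d.
by exists [seq (c, y) | y <- s]; rewrite ?path_box_r ?last_box_r.
Qed.

Lemma dist_box a b c d : dist box (a, b) (c, d) = dist e1 a c + dist e2 b d.
Proof.
apply/eqP; rewrite eqn_leq; apply/andP; split.
  apply: dist_min box_connected _ _ _ _; apply: (walkb_cat (v := (c, b))).
    exact/walkb_box_l/walkb_dist.
  exact/walkb_box_r/walkb_dist.
pose phi x := dist e1 x.1 c + dist e2 x.2 d.
have := @dist_lipschitz _ box box_connected phi _ (a, b) (c, d).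
rewrite /phi /= !dist0 // !addn0; apply=> [[x y] [x' y']].
rewrite /boxrel /= => /orP[] /andP[/eqP <- xy].
  by have := dist_triangle e2_conn y y' d; have := dist_edge e2_conn xy; lia.
by have := dist_triangle e1_conn x x' c; have := dist_edge e1_conn xy; lia.
Qed.

Lemma interval_box a b p q c d :
  interval box (a, b) (p, q) (c, d) = interval e1 a p c && interval e2 b q d.
Proof.
have := dist_triangle e1_conn a c p; have := dist_triangle e2_conn b d q.
move=> tri2 tri1; apply/(intervalP box_connected)/andP; rewrite !dist_box.
  by split; apply/intervalP => //; lia.
by case=> /(intervalP e1_conn) acp /(intervalP e2_conn) bdq; lia.
Qed.

Lemma strongly_resolves_box p q a b c d :
  strongly_resolves box (p, q) (a, b) (c, d) =
  (interval e1 a p c && interval e2 b q d) || (interval e1 c p a && interval e2 d q b).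
Proof. by rewrite /strongly_resolves !interval_box. Qed.

Section StrongResolvingSets.
Hypotheses (e1_irr : irreflexive e1) (e2_irr : irreflexive e2).
Hypotheses (T1_gt1 : 1 < #|T1|) (T2_gt1 : 1 < #|T2|).

(* A single vertex [(a, b)] cannot strongly resolve [(a', b)] and [(a, b')]
   for neighbours [a'] of [a] and [b'] of [b]. *)
Lemma box_strong_resolving_card_gt1 (S : {set T1 * T2}) :
  strong_resolving_set box S -> 1 < #|S|.
Proof.
move=> /strong_resolving_setP S_res.
have [a1 [a2 [_ _ a12]]] := card_gt1P T1_gt1.
have [b0 _] := card_gt1P T2_gt1.
have [[a b] ab_S _] : exists2 w, w \in S & strongly_resolves box w (a1, b0) (a2, b0).
  by apply: S_res; rewrite xpair_eqE negb_and a12.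
have [a' aa'] := exists_edge e1_conn a T1_gt1.
have [b' bb'] := exists_edge e2_conn b T2_gt1.
have a'a : a' != a by apply: contraTneq aa' => ->; rewrite e1_irr.
have [w w_S w_res] : exists2 w, w \in S & strongly_resolves box w (a', b) (a, b').
  by apply: S_res; rewrite xpair_eqE negb_and a'a.
apply/card_gt1P; exists (a, b), w; split => //; apply: contraTneq w_res => <-.
rewrite strongly_resolves_box negb_or !negb_and.
apply/andP; split; apply/orP; [right | left]; apply/negP.
  by move=> /(interval_id e2_conn) b'b; move: bb'; rewrite b'b e2_irr.
by move=> /(interval_id e1_conn) a'a_eq; move: a'a; rewrite a'a_eq eqxx.
Qed.

(* If [(p1, q1)] and [(p2, q2)] strongly resolve the product and [a != c] were
   equidistant from [p1], then [(p1, q1)] could not resolve [(a, q2)] from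
   [(c, y)] for [y != q2], so [(p2, q2)] would have to, forcing [c] onto a
   geodesic from [a] to [p2]; by symmetry also [a] onto one from [c] to [p2]. *)
Lemma box_resolving_pair_dist_inj p1 q1 p2 q2 :
  strong_resolving_set box [set (p1, q1); (p2, q2)] -> injective (dist e1 ^~ p1).
Proof.
move=> /strong_resolving_setP S_res.
have [y y_q2] := exists_neq q2 T2_gt1.
have between a c : a != c -> dist e1 a p1 = dist e1 c p1 -> interval e1 c p2 a.
  move=> ac ac_p1.
  have [w] : exists2 w, w \in [set (p1, q1); (p2, q2)] &
      strongly_resolves box w (a, q2) (c, y).
    by apply: S_res; rewrite xpair_eqE negb_and ac.
  have not_via_p1 : ~~ interval e1 a p1 c && ~~ interval e1 c p1 a.
    apply/andP; split; apply: contra ac => /(interval_dist_eq e1_conn).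
      by move=> /(_ ac_p1) ->.
    by move=> /(_ (esym ac_p1)) ->.
  rewrite !inE => /orP[] /eqP ->; rewrite strongly_resolves_box.
    by case/andP: not_via_p1 => /negbTE-> /negbTE->.
  case/orP=> /andP[// _ /(interval_id e2_conn) y_eq].
  by move: y_q2; rewrite y_eq eqxx.
move=> a c ac_p1; case: (eqVneq a c) => // ac.
have ca : c != a by rewrite eq_sym.
have := interval_antisym e1_conn (between a c ac ac_p1) (between c a ca (esym ac_p1)).
by move/eqP; rewrite (negbTE ca).
Qed.
End StrongResolvingSets.

Lemma box_strong_resolving_ends x0 xm y0 :
  (forall a c, interval e1 a x0 c || interval e1 a xm c) ->
  (forall b d, interval e2 b y0 d || interval e2 d y0 b) ->
  strong_resolving_set box [set (x0, y0); (xm, y0)].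
Proof.
move=> ends1 ends2; apply/strong_resolving_setP => [[a b] [c d] _].
case/orP: (ends2 b d) => [bd | db].
  by case/orP: (ends1 a c) => ac; [exists (x0, y0) | exists (xm, y0)];
    rewrite ?inE ?eqxx ?orbT // strongly_resolves_box ac bd.
by case/orP: (ends1 c a) => ca; [exists (x0, y0) | exists (xm, y0)];
  rewrite ?inE ?eqxx ?orbT // strongly_resolves_box ca db orbT.
Qed.
End CartesianProduct.

Lemma box_resolving_pair_swap (T1 T2 : finType) (e1 : rel T1) (e2 : rel T2)
    p1 q1 p2 q2 :
  connected_graph e1 -> connected_graph e2 ->
  strong_resolving_set (boxrel e1 e2) [set (p1, q1); (p2, q2)] ->
  strong_resolving_set (boxrel e2 e1) [set (q1, p1); (q2, p2)].
Proof.
move=> e1_conn e2_conn /strong_resolving_setP S_res.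
apply/strong_resolving_setP => [[b a] [d c]] ba_dc.
have [[p q] pq_S pq_res] : exists2 w, w \in [set (p1, q1); (p2, q2)] &
    strongly_resolves (boxrel e1 e2) w (a, b) (c, d).
  by apply: S_res; move: ba_dc; rewrite !xpair_eqE andbC.
exists (q, p); first by move: pq_S; rewrite !inE !xpair_eqE ![(q == _) && _]andbC.
move: pq_res; rewrite !strongly_resolves_box //.
by rewrite (andbC (interval e2 b q d)) (andbC (interval e2 d q b)).
Qed.

Theorem proposition29 (T1 T2 : finType) (e1 : rel T1) (e2 : rel T2) :
  simple_graph e1 -> simple_graph e2 ->
  connected_graph e1 -> connected_graph e2 ->
  1 < #|T1| -> 1 < #|T2| ->
  (sdim (boxrel e1 e2) = 2 <-> is_path_graph e1 /\ is_path_graph e2).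
Proof.
move=> [e1_sym e1_irr] [e2_sym e2_irr] e1_conn e2_conn T1_gt1 T2_gt1.
have box_conn := box_connected e1_conn e2_conn.
have sdim_gt1 : 1 < sdim (boxrel e1 e2).
  have [S S_res <-] := sdim_attained box_conn.
  exact: (box_strong_resolving_card_gt1 e1_conn e2_conn e1_irr e2_irr
            T1_gt1 T2_gt1 S_res).
split=> [sdim2 | [path1 path2]].
  have [S S_res] := sdim_attained box_conn.
  rewrite sdim2 => /eqP/cards2P[[p1 q1] [[p2 q2] [_ S_eq]]].
  rewrite {}S_eq in S_res; split.
    apply: (path_graph_of_dist_inj e1_sym e1_irr e1_conn).
    exact: box_resolving_pair_dist_inj e1_conn e2_conn T2_gt1 _ _ _ _ S_res.
  apply: (path_graph_of_dist_inj e2_sym e2_irr e2_conn).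
  apply: (box_resolving_pair_dist_inj e2_conn e1_conn T1_gt1).
  exact: box_resolving_pair_swap e1_conn e2_conn S_res.
have [x0 [xm [ends1 _]]] := path_graph_ends e1_sym e1_conn path1 (ltnW T1_gt1).
have [y0 [_ [_ ends2]]] := path_graph_ends e2_sym e2_conn path2 (ltnW T2_gt1).
apply/eqP; rewrite eqn_leq sdim_gt1 andbT.
apply: leq_trans (sdim_le (box_strong_resolving_ends e1_conn e2_conn ends1 ends2)) _.
by rewrite cards2; case: (_ != _).
Qed.
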